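(* Let $\mathbf A\in\mathbb{R}^{N\times N}$, $\mathbf B,\mathbf C\in\mathbb{R}^{N\times n_s}$, fix a sign $\pm$, and let $\mathbf U\in\mathbb{R}^{N\times n}$ be a POD basis with columns $\mathbf u_1,\dots,\mathbf u_n$. Set $\hat{\mathbf A}=\mathbf U^\intercal\mathbf A\mathbf U\in\mathbb{R}^{n\times n}$, $\hat{\mathbf B}=\mathbf U^\intercal\mathbf B$, $\hat{\mathbf C}=\mathbf U^\intercal\mathbf C\in\mathbb{R}^{n\times n_s}$, and suppose $\hat{\mathbf D}\in\mathbb{R}^{n\times n}$ is the unique solution of \[\operatorname*{argmin}_{\mathbf D\in\mathbb{R}^{n\times n}}\|\hat{\mathbf C}-\hat{\mathbf A}\mathbf D\hat{\mathbf B}\|^2\quad\text{subject to}\quad\mathbf D^\intercal=\pm\mathbf D.\] Let $n'<n$, let $\mathbf U'\in\mathbb{R}^{N\times n'}$ consist of the first $n'$ columns of $\mathbf U$ (i.e. the $n-n'$ highest-frequency basis vectors removed), and set $\hat{\mathbf A}'=\mathbf U'^\intercal\mathbf A\mathbf U'$, $\hat{\mathbf B}'=\mathbf U'^\intercal\mathbf B$, $\hat{\mathbf C}'=\mathbf U'^\intercal\mathbf C$, and let $\hat{\mathbf D}'$ be the top-left $n'\times n'$ submatrix of $\hat{\mathbf D}$. If $\hat{\mathbf A}$ and $\hat{\mathbf B}\hat{\mathbf B}^\intercal$ are both diagonal, then the unique solution of \[\operatorname*{argmin}_{\mathbf D\in\mathbb{R}^{n'\times n'}}\|\hat{\mathbf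 C}'-\hat{\mathbf A}'\mathbf D\hat{\mathbf B}'\|^2\quad\text{subject to}\quad\mathbf D^\intercal=\pm\mathbf D\] is given by the truncation $\hat{\mathbf D}'$.
   Context: A POD basis is a matrix $\mathbf U\in\mathbb{R}^{N\times n}$ whose columns are the first $n$ left singular vectors (ordered by decreasing singular value) of a snapshot data matrix; in particular $\mathbf U^\intercal\mathbf U=\mathbf I$. $\|\cdot\|$ is the Frobenius norm. *)

From mathcomp Require Import all_boot all_order all_algebra.
From mathcomp Require Import reals.
Set Implicit Arguments. Unset Strict Implicit. Unset Printing Implicit Defensive.
Import Order.TTheory GRing.Theory Num.Theory.
Local Open Scope ring_scope.

Definition frob2 (R : realType) m n (M : 'M[R]_(m, n)) : R :=
  \sum_(i < m) \sum_(j < n) M i j ^+ 2.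

(* The fixed sign: pm = false means "+", pm = true means "-". *)
Definition sgn (R : realType) (pm : bool) : R := (-1) ^+ pm.

Definition first_cols (R : realType) N n k (hk : (k <= n)%N) (U : 'M[R]_(N, n))
  : 'M[R]_(N, k) := \matrix_(i < N, j < k) U i (widen_ord hk j).

Definition topleft (R : realType) n k (hk : (k <= n)%N) (D : 'M[R]_n) : 'M[R]_k :=
  \matrix_(i < k, j < k) D (widen_ord hk i) (widen_ord hk j).

(* U is a POD basis: its columns are the first n left singular vectors,
   ordered by decreasing singular value, of some snapshot matrix X, i.e.
   X = W S V^T is an SVD (W, V orthogonal, S rectangular diagonal with
   nonnegative non-increasing diagonal) and U consists of the first n
   columns of W. *)
Definition POD_basis (R : realType) N n (U : 'M[R]_(N, n)) : Prop :=
  exists (m : nat) (X : 'M[R]_(N, m)) (W : 'M[R]_N) (S : 'M[R]_(N, m))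
         (V : 'M[R]_m) (hn : (n <= N)%N),
    [/\ W^T *m W = 1%:M, V^T *m V = 1%:M, X = W *m S *m V^T & is_diag_mx S] /\
    [/\
        (forall (i : 'I_N) (j : 'I_m), (i : nat) = j -> 0 <= S i j),
        (forall (i i' : 'I_N) (j j' : 'I_m), (i : nat) = j -> (i' : nat) = j' ->
           (i <= i')%N -> S i' j' <= S i j)
      & U = first_cols hn W].

Definition obj (R : realType) n ns (Ah : 'M[R]_n) (Bh Ch : 'M[R]_(n, ns))
  (D : 'M[R]_n) : R := frob2 (Ch - Ah *m D *m Bh).

Definition is_argmin (R : realType) (pm : bool) n ns (Ah : 'M[R]_n)
  (Bh Ch : 'M[R]_(n, ns)) (D : 'M[R]_n) : Prop :=
  D^T = sgn R pm *: D /\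
  forall D' : 'M[R]_n, D'^T = sgn R pm *: D' -> obj Ah Bh Ch D <= obj Ah Bh Ch D'.

Definition is_unique_argmin (R : realType) (pm : bool) n ns (Ah : 'M[R]_n)
  (Bh Ch : 'M[R]_(n, ns)) (D : 'M[R]_n) : Prop :=
  is_argmin pm Ah Bh Ch D /\
  forall D' : 'M[R]_n, is_argmin pm Ah Bh Ch D' -> D' = D.

(* When Ah := U^T A U and Bh Bh^T are diagonal, the objective splits entrywise:
   ||Ch - Ah D Bh||^2 = ||Ch||^2 + sum_(i,j) c_ij(D_ij), where the cost c_ij of
   the entry D_ij only involves Ah_ii, (Bh Bh^T)_jj and (Ch Bh^T)_ij.  Keeping
   the first n' columns of U makes the reduced data the leading blocks of the
   full data, so the reduced objective G is ||Ch'||^2 plus the same costs over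
   the top-left n' x n' block.  Hence F D - G (topleft D) does not depend on
   that block, and exchanging top-left blocks between (anti)symmetric
   candidates of the full and reduced problems preserves optimality, which
   transfers existence and uniqueness of the minimizer. *)

From mathcomp Require Import all_boot all_order all_algebra.
From mathcomp Require Import reals.
From mathcomp Require Import ring lra.
Set Implicit Arguments.
Unset Strict Implicit.
Unset Printing Implicit Defensive.
Import Order.TTheory GRing.Theory Num.Theory.
Local Open Scope ring_scope.

Section DiagonalProducts.
Variable R : pzRingType.

Lemma diag_mulmx_entry m p (S : 'M[R]_m) (X : 'M[R]_(m, p)) i k :
  is_diag_mx S -> (S *m X) i k = S i i * X i k.
Proof. by case/diag_mxP=> d ->; rewrite mul_diag_mx !mxE eqxx mulr1n. Qed.

Lemma mulmx_diag_entry m p (X : 'M[R]_(m, p)) (S : 'M[R]_p) i j :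
  is_diag_mx S -> (X *m S) i j = X i j * S j j.
Proof. by case/diag_mxP=> d ->; rewrite mul_mx_diag !mxE eqxx mulr1n. Qed.

End DiagonalProducts.

Section SeparableObjective.
Variables (R : realType) (n ns : nat) (Ah : 'M[R]_n) (Bh Ch : 'M[R]_(n, ns)).

Definition entry_cost (i j : 'I_n) (x : R) : R :=
  Ah i i ^+ 2 * (x ^+ 2 * (Bh *m Bh^T) j j)
  - 2 * Ah i i * (x * (Ch *m Bh^T) i j).

Lemma obj_diag_separable (D : 'M[R]_n) :
  is_diag_mx Ah -> is_diag_mx (Bh *m Bh^T) ->
  obj Ah Bh Ch D = frob2 Ch + \sum_i \sum_j entry_cost i j (D i j).
Proof.
move=> dA dB; rewrite /obj /frob2 -big_split /=; apply: eq_bigr => i _.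
have cross : \sum_k Ch i k * (D *m Bh) i k = \sum_j D i j * (Ch *m Bh^T) i j.
  transitivity ((Ch *m Bh^T *m D^T) i i); last first.
    by rewrite mxE; apply: eq_bigr => j _; rewrite [D^T _ _]mxE mulrC.
  by rewrite -mulmxA -trmx_mul mxE; apply: eq_bigr => k _; rewrite [_^T _ _]mxE.
have square : \sum_k (D *m Bh) i k ^+ 2 = \sum_j D i j ^+ 2 * (Bh *m Bh^T) j j.
  transitivity ((D *m (Bh *m Bh^T) *m D^T) i i); last first.
    rewrite mxE; apply: eq_bigr => j _.
    by rewrite mulmx_diag_entry // [D^T _ _]mxE; ring.
  rewrite mulmxA -mulmxA -trmx_mul mxE; apply: eq_bigr => k _.
  by rewrite [_^T _ _]mxE expr2.
have -> : \sum_k (Ch - Ah *m D *m Bh) i k ^+ 2 =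
  \sum_k Ch i k ^+ 2 - 2 * Ah i i * \sum_k Ch i k * (D *m Bh) i k
  + Ah i i ^+ 2 * \sum_k (D *m Bh) i k ^+ 2.
  rewrite !mulr_sumr -sumrB -big_split /=; apply: eq_bigr => k _.
  have -> : (Ch - Ah *m D *m Bh) i k = Ch i k - Ah i i * (D *m Bh) i k.
    by rewrite -mulmxA -diag_mulmx_entry // !mxE.
  ring.
rewrite cross square /entry_cost -addrA; congr (_ + _).
by rewrite !mulr_sumr -sumrN -big_split /=; apply: eq_bigr => j _; ring.
Qed.

End SeparableObjective.

Section Truncation.
Variables (R : realType) (n k : nat) (h : (k <= n)%N).
Local Notation w := (widen_ord h).

Definition first_rows m (M : 'M[R]_(n, m)) : 'M[R]_(k, m) :=
  \matrix_(i, j) M (w i) j.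

Definition with_topleft (E : 'M[R]_k) (D : 'M[R]_n) : 'M[R]_n :=
  \matrix_(i, j) match insub (i : nat), insub (j : nat) with
                 | Some i', Some j' => E i' j'
                 | _, _ => D i j
                 end.

Lemma with_topleft_widen E D i j : with_topleft E D (w i) (w j) = E i j.
Proof. by rewrite mxE /= !valK. Qed.

Lemma with_topleft_outside E D (i j : 'I_n) :
  ~~ ((i < k) && (j < k))%N -> with_topleft E D i j = D i j.
Proof.
rewrite mxE; case: (@insubP _ _ 'I_k i) => [i' -> _|//].
by case: (@insubP _ _ 'I_k j) => [j' -> _|].
Qed.

Lemma topleft_with_topleft E D : topleft h (with_topleft E D) = E.
Proof. by apply/matrixP => i j; rewrite mxE with_topleft_widen. Qed.

Lemma trmx_topleft (D : 'M[R]_n) : (topleft h D)^T = topleft h D^T.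
Proof. by apply/matrixP => i j; rewrite !mxE. Qed.

Lemma topleft_scale a (D : 'M[R]_n) : topleft h (a *: D) = a *: topleft h D.
Proof. by apply/matrixP => i j; rewrite !mxE. Qed.

Lemma trmx_with_topleft E D : (with_topleft E D)^T = with_topleft E^T D^T.
Proof.
apply/matrixP => i j; rewrite !mxE.
case: (@insubP _ _ 'I_k i) => [i' _ _|_];
  by case: (@insubP _ _ 'I_k j) => [j' _ _|_]; rewrite ?mxE.
Qed.

Lemma with_topleft_scale a E D :
  with_topleft (a *: E) (a *: D) = a *: with_topleft E D.
Proof.
apply/matrixP => i j; rewrite !mxE.
case: (@insubP _ _ 'I_k i) => [i' _ _|_];
  by case: (@insubP _ _ 'I_k j) => [j' _ _|_]; rewrite ?mxE.
Qed.

Lemma is_diag_topleft (D : 'M[R]_n) : is_diag_mx D -> is_diag_mx (topleft h D).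
Proof.
move/is_diag_mxP=> dD; apply/is_diag_mxP => i j neq_ij; rewrite mxE; exact: dD.
Qed.

Lemma first_rows_mul_tr m (M M' : 'M[R]_(n, m)) :
  first_rows M *m (first_rows M')^T = topleft h (M *m M'^T).
Proof.
by apply/matrixP => i j; rewrite !mxE; apply: eq_bigr => l _; rewrite !mxE.
Qed.

Lemma tr_first_cols_mulmx N m (U : 'M[R]_(N, n)) (M : 'M[R]_(N, m)) :
  (first_cols h U)^T *m M = first_rows (U^T *m M).
Proof.
by apply/matrixP => i j; rewrite !mxE; apply: eq_bigr => l _; rewrite !mxE.
Qed.

Lemma first_cols_compression N (U : 'M[R]_(N, n)) (A : 'M[R]_N) :
  (first_cols h U)^T *m A *m first_cols h U = topleft h (U^T *m A *m U).
Proof.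
rewrite tr_first_cols_mulmx; apply/matrixP => i j; rewrite !mxE.
by apply: eq_bigr => l _; rewrite !mxE.
Qed.

Lemma sum_topleft_split (V : nmodType) (f : 'I_n -> 'I_n -> V) :
  \sum_i \sum_j f i j = \sum_(i < k) \sum_(j < k) f (w i) (w j)
    + \sum_(i : 'I_n) \sum_(j : 'I_n | ~~ ((i < k) && (j < k))%N) f i j.
Proof.
under eq_bigr => i _ do
  rewrite (bigID (fun j : 'I_n => (i < k) && (j < k))%N) /=.
rewrite big_split /=; congr (_ + _).
symmetry; rewrite -(big_ord_narrow (F := fun i => \sum_(j < k) f i (w j)) h).
rewrite big_mkcond /=; apply: eq_bigr => i _.
case: ifP => ik; last by rewrite big_pred0.
by rewrite (big_ord_narrow (F := f i) h).
Qed.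

End Truncation.

Section TruncatedProblem.
Variables (R : realType) (n k ns : nat) (h : (k <= n)%N).
Variables (Ah : 'M[R]_n) (Bh Ch : 'M[R]_(n, ns)).
Hypotheses (dA : is_diag_mx Ah) (dB : is_diag_mx (Bh *m Bh^T)).
Local Notation w := (widen_ord h).
Local Notation Ah' := (topleft h Ah).
Local Notation Bh' := (first_rows h Bh).
Local Notation Ch' := (first_rows h Ch).

Lemma entry_cost_topleft i j x :
  entry_cost Ah' Bh' Ch' i j x = entry_cost Ah Bh Ch (w i) (w j) x.
Proof. by rewrite /entry_cost !first_rows_mul_tr !mxE. Qed.

Lemma obj_topleft_split (D : 'M[R]_n) :
  obj Ah Bh Ch D = obj Ah' Bh' Ch' (topleft h D) + (frob2 Ch - frob2 Ch')
    + \sum_(i : 'I_n) \sum_(j : 'I_n | ~~ ((i < k) && (j < k))%N)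
        entry_cost Ah Bh Ch i j (D i j).
Proof.
have dA' : is_diag_mx Ah' by exact: is_diag_topleft.
have dB' : is_diag_mx (Bh' *m Bh'^T).
  by rewrite first_rows_mul_tr is_diag_topleft.
rewrite !obj_diag_separable // (sum_topleft_split h).
under [X in _ = _ + X + _ + _]eq_bigr => i _ do under eq_bigr => j _ do
  rewrite entry_cost_topleft mxE.
ring.
Qed.

Lemma obj_with_topleft (E : 'M[R]_k) (D : 'M[R]_n) :
  obj Ah Bh Ch (with_topleft E D) - obj Ah' Bh' Ch' E =
  obj Ah Bh Ch D - obj Ah' Bh' Ch' (topleft h D).
Proof.
rewrite !obj_topleft_split topleft_with_topleft.
under eq_bigr => i _ do under eq_bigr => j out_ij do
  rewrite with_topleft_outside //.
ring.
Qed.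

Lemma unique_argmin_topleft pm (Dh : 'M[R]_n) :
  is_unique_argmin pm Ah Bh Ch Dh ->
  is_unique_argmin pm Ah' Bh' Ch' (topleft h Dh).
Proof.
set s := sgn R pm.
have symT (D : 'M[R]_n) : D^T = s *: D -> (topleft h D)^T = s *: topleft h D.
  by move=> sD; rewrite trmx_topleft sD topleft_scale.
have symW (E : 'M[R]_k) (D : 'M[R]_n) : E^T = s *: E -> D^T = s *: D ->
    (with_topleft E D)^T = s *: with_topleft E D.
  by move=> sE sD; rewrite trmx_with_topleft sE sD with_topleft_scale.
move=> [[sDh minDh] uniqDh].
have minG : is_argmin pm Ah' Bh' Ch' (topleft h Dh).
  split=> [|E sE]; first exact: symT.
  have := minDh _ (symW _ _ sE sDh); have := obj_with_topleft E Dh; lra.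
split=> // E [sE minE].
suff /uniqDh <- : is_argmin pm Ah Bh Ch (with_topleft E Dh).
  by rewrite topleft_with_topleft.
split=> [|D sD]; first exact: symW.
have := minDh _ (symW _ _ (symT _ sDh) sD).
have := obj_with_topleft (topleft h Dh) D.
have := obj_with_topleft E Dh.
have := minE _ (symT _ sD).
lra.
Qed.

End TruncatedProblem.

Theorem proposition2 (R : realType) (N ns n n' : nat) (pm : bool)
  (A : 'M[R]_N) (B C : 'M[R]_(N, ns)) (U : 'M[R]_(N, n))
  (hn' : (n' < n)%N) (Dh : 'M[R]_n) :
  POD_basis U ->
  is_unique_argmin pm (U^T *m A *m U) (U^T *m B) (U^T *m C) Dh ->
  is_diag_mx (U^T *m A *m U) ->
  is_diag_mx ((U^T *m B) *m (U^T *m B)^T) ->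
  let U' := first_cols (ltnW hn') U in
  is_unique_argmin pm (U'^T *m A *m U') (U'^T *m B) (U'^T *m C)
    (topleft (ltnW hn') Dh).
Proof.
move=> _ Dh_opt dA dB U'.
rewrite /U' first_cols_compression !tr_first_cols_mulmx.
exact: unique_argmin_topleft.
Qed.
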